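(* Let $p\ge0$ be an integer and $0<x<2\pi$. Then $$\sum_{k=1}^\infty\frac{\cos(kx)}{(2k-1)(2k)^p(2k+1)}=\begin{cases}\dfrac12-\dfrac{\pi}{4}\sin\dfrac x2-\displaystyle\sum_{j=1}^{p/2}\frac{\mathrm{Gl}_{2j}(x)}{2^{2j}}, & p\text{ even},\\[8pt] -\dfrac12-\dfrac12\cos\dfrac x2\,\ln\Big(\tan\dfrac x4\Big)+\dfrac12\ln\Big(2\sin\dfrac x2\Big)-\displaystyle\sum_{j=1}^{(p-1)/2}\frac{\mathrm{Cl}_{2j+1}(x)}{2^{2j+1}}, & p\text{ odd},\end{cases}$$ and $$\sum_{k=1}^\infty\frac{\sin(kx)}{(2k-1)(2k)^p(2k+1)}=\begin{cases}-\dfrac12\sin\dfrac x2\,\ln\Big(\tan\dfrac x4\Big)-\displaystyle\sum_{j=1}^{p/2}\frac{\mathrm{Cl}_{2j}(x)}{2^{2j}}, & p\text{ even},\\[8pt] \dfrac{\pi}{4}\cos\dfrac x2-\dfrac14(\pi-x)-\displaystyle\sum_{j=1}^{(p-1)/2}\frac{\mathrm{Gl}_{2j+1}(x)}{2^{2j+1}}, & p\text{ odd},\end{cases}$$ with empty sums equal to $0$.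
   Context: For integers $n\ge1$ the Clausen functions are $\mathrm{Cl}_{2n}(x)=\sum_{k\ge1}\frac{\sin(kx)}{k^{2n}}$, $\mathrm{Cl}_{2n+1}(x)=\sum_{k\ge1}\frac{\cos(kx)}{k^{2n+1}}$, $\mathrm{Gl}_{2n}(x)=\sum_{k\ge1}\frac{\cos(kx)}{k^{2n}}$, $\mathrm{Gl}_{2n+1}(x)=\sum_{k\ge1}\frac{\sin(kx)}{k^{2n+1}}$; equivalently $\operatorname{Li}_{2n}(e^{ix})=\mathrm{Gl}_{2n}(x)+i\,\mathrm{Cl}_{2n}(x)$ and $\operatorname{Li}_{2n+1}(e^{ix})=\mathrm{Cl}_{2n+1}(x)+i\,\mathrm{Gl}_{2n+1}(x)$. *)

From Stdlib Require Import Reals.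
From Coquelicot Require Import Coquelicot.
Open Scope R_scope.

(* Series is indexed from 0, so the summand at index n is for k = n+1. *)
Definition Cl (m : nat) (x : R) : R :=
  if Nat.even m
  then Series (fun n => sin (INR (S n) * x) / INR (S n) ^ m)
  else Series (fun n => cos (INR (S n) * x) / INR (S n) ^ m).

Definition Gl (m : nat) (x : R) : R :=
  if Nat.even m
  then Series (fun n => cos (INR (S n) * x) / INR (S n) ^ m)
  else Series (fun n => sin (INR (S n) * x) / INR (S n) ^ m).

Definition den (p : nat) (n : nat) : R :=
  (2 * INR (S n) - 1) * (2 * INR (S n)) ^ p * (2 * INR (S n) + 1).

Definition fsum1 (q : nat) (f : nat -> R) : R := sum_n_m f 1 q.

(* For p = 0 and p = 1, 1 / den p n is the moment int_0^1 w_p(t) t^(2n) dt of the weight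
   w_0 t = (1 - t^2) / 2, resp. w_1 t = (1 - t)^2 / 2.  Summing under the integral, with the
   explicit remainder of sum_k u^(k-1) cos (k x) = (cos x - u) / (1 - 2 u cos x + u^2) (and of its
   sine analogue) at u = t^2, turns each series into the integral of a rational function of t.
   Its denominator factors as (t^2 - 2 c t + 1) (t^2 + 2 c t + 1) with c = cos (x / 2), so it
   integrates to arctangents and logarithms, evaluated at t = 0, 1 by half-angle formulas.
   Larger p follow from 1 / den (p + 2) n = 1 / den p n - 1 / (2 k)^(p + 2), which peels off
   one Clausen term per step. *)

From Stdlib Require Import Reals Lra Lia Psatz.
From Coquelicot Require Import Coquelicot.
Open Scope R_scope.

Lemma is_lim_seq_div_INR_S (K : R) : is_lim_seq (fun N => K / INR (S N)) 0.
Proof.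
  replace (Finite 0) with (Rbar_mult K (Rbar_inv p_infty)) by (simpl; f_equal; ring).
  apply is_lim_seq_scal_l, is_lim_seq_inv; [|discriminate].
  apply (is_lim_seq_incr_1 INR), is_lim_seq_INR.
Qed.

Lemma is_series_of_rate (a : nat -> R) (L K : R) :
  (forall N, Rabs (sum_n a N - L) <= K / INR (S N)) -> is_series a L.
Proof.
  intros Hrate. change (is_lim_seq (sum_n a) L).
  apply (is_lim_seq_le_le (fun N => L - K / INR (S N)) _ (fun N => L + K / INR (S N))).
  - intros N. specialize (Hrate N). apply Rabs_le_between in Hrate. lra.
  - replace (Finite L) with (Rbar_minus L 0) by (simpl; f_equal; ring).
    apply is_lim_seq_minus'; [apply is_lim_seq_const | apply is_lim_seq_div_INR_S].
  - replace (Finite L) with (Rbar_plus L 0) by (simpl; f_equal; ring).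
    apply is_lim_seq_plus'; [apply is_lim_seq_const | apply is_lim_seq_div_INR_S].
Qed.

Lemma is_RInt_scal_pow_0_1 (K : R) (m : nat) :
  is_RInt (fun t => K * t ^ m) 0 1 (K / INR (S m)).
Proof.
  replace (K / INR (S m)) with (scal K (1 ^ S m / INR (S m) - 0 ^ S m / INR (S m))).
  - apply (is_RInt_scal (fun t => t ^ m)), is_RInt_pow.
  - assert (INR (S m) <> 0) by (apply not_0_INR; lia).
    rewrite pow1, pow_i by lia. unfold scal; simpl; unfold mult; simpl. field; auto.
Qed.

Lemma is_RInt_sum_n (g : nat -> R -> R) (a : nat -> R) (N : nat) :
  (forall n, is_RInt (g n) 0 1 (a n)) ->
  is_RInt (fun t => sum_n (fun n => g n t) N) 0 1 (sum_n a N).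
Proof.
  intros Hg. induction N as [|N IH].
  - rewrite sum_O. apply (is_RInt_ext (g 0%nat)); [intros; rewrite sum_O|]; auto.
  - rewrite sum_Sn. apply (is_RInt_ext (fun t => plus (sum_n (fun n => g n t) N) (g (S N) t))).
    + intros. rewrite sum_Sn. reflexivity.
    + exact (is_RInt_plus _ _ _ _ _ _ IH (Hg (S N))).
Qed.

Lemma is_series_of_RInt_remainder (a : nat -> R) (g : nat -> R -> R) (h : R -> R) (L K : R) :
  (forall n, is_RInt (g n) 0 1 (a n)) ->
  is_RInt h 0 1 L ->
  (forall N t, 0 <= t <= 1 -> Rabs (h t - sum_n (fun n => g n t) N) <= K * t ^ N) ->
  is_series a L.
Proof.
  intros Hg Hh Hrem.
  apply is_series_of_rate with K. intros N.
  rewrite Rabs_minus_sym.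
  apply (norm_RInt_le (fun t => h t - sum_n (fun n => g n t) N) (fun t => K * t ^ N) 0 1);
    [lra | apply Hrem | | apply is_RInt_scal_pow_0_1].
  apply (is_RInt_minus h); [exact Hh | apply is_RInt_sum_n, Hg].
Qed.

Lemma sum_n_pow_cos (x u : R) (N : nat) :
  sum_n (fun k => u ^ k * cos (INR (S k) * x)) N * (1 - 2 * u * cos x + u ^ 2)
  = cos x - u - u ^ S N * (cos (INR (S (S N)) * x) - u * cos (INR (S N) * x)).
Proof.
  induction N as [|N IH].
  - rewrite sum_O. replace (INR 2 * x) with (2 * x) by (simpl; ring).
    replace (INR 1 * x) with x by (simpl; ring).
    rewrite cos_2a_cos. simpl. ring.
  - rewrite sum_Sn. change (plus ?a ?b) with (a + b).
    rewrite Rmult_plus_distr_r, IH.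
    set (y := INR (S (S N)) * x).
    replace (INR (S N) * x) with (y - x) by (unfold y; rewrite !S_INR; ring).
    replace (INR (S (S (S N))) * x) with (y + x) by (unfold y; rewrite !S_INR; ring).
    rewrite cos_plus, cos_minus. simpl. ring.
Qed.

Lemma sum_n_pow_sin (x u : R) (N : nat) :
  sum_n (fun k => u ^ k * sin (INR (S k) * x)) N * (1 - 2 * u * cos x + u ^ 2)
  = sin x - u ^ S N * (sin (INR (S (S N)) * x) - u * sin (INR (S N) * x)).
Proof.
  induction N as [|N IH].
  - rewrite sum_O. replace (INR 2 * x) with (2 * x) by (simpl; ring).
    replace (INR 1 * x) with x by (simpl; ring).
    rewrite sin_2a. simpl. ring.
  - rewrite sum_Sn. change (plus ?a ?b) with (a + b).
    rewrite Rmult_plus_distr_r, IH.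
    set (y := INR (S (S N)) * x).
    replace (INR (S N) * x) with (y - x) by (unfold y; rewrite !S_INR; ring).
    replace (INR (S (S (S N))) * x) with (y + x) by (unfold y; rewrite !S_INR; ring).
    rewrite sin_plus, sin_minus. simpl. ring.
Qed.

Lemma trig_geometric_remainder (x δ u : R) (trig P : R -> R) (N : nat) :
  0 <= u <= 1 -> 0 < δ -> δ <= 1 - 2 * u * cos x + u ^ 2 ->
  (forall z, Rabs (trig z) <= 1) ->
  sum_n (fun k => u ^ k * trig (INR (S k) * x)) N * (1 - 2 * u * cos x + u ^ 2)
    = P u - u ^ S N * (trig (INR (S (S N)) * x) - u * trig (INR (S N) * x)) ->
  Rabs (P u / (1 - 2 * u * cos x + u ^ 2)
        - sum_n (fun k => u ^ k * trig (INR (S k) * x)) N) <= 2 * u ^ S N / δ.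
Proof.
  intros Hu Hδ HD Htrig Hsum.
  set (D := 1 - 2 * u * cos x + u ^ 2) in *.
  set (B := trig (INR (S (S N)) * x) - u * trig (INR (S N) * x)) in *.
  assert (HB : Rabs B <= 2).
  { unfold B. eapply Rle_trans; [apply Rabs_triang|].
    rewrite Rabs_Ropp, Rabs_mult, (Rabs_right u) by lra.
    pose proof (Htrig (INR (S (S N)) * x)). pose proof (Htrig (INR (S N) * x)).
    pose proof (Rabs_pos (trig (INR (S N) * x))). nra. }
  assert (Hpow : 0 <= u ^ S N) by (apply pow_le; lra).
  assert (Hsum' : @eq R (sum_n (fun k => u ^ k * trig (INR (S k) * x)) N)
                        ((P u - u ^ S N * B) / D))
    by (apply (Rmult_eq_reg_r D); [rewrite Hsum; field|]; lra).
  rewrite Hsum'. replace (P u / D - _) with (u ^ S N * B / D) by (field; lra).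
  rewrite Rabs_div, Rabs_mult, (Rabs_right D), (Rabs_right (u ^ S N)) by lra.
  apply Rle_trans with (2 * u ^ S N / D).
  - apply Rmult_le_compat_r; [apply Rlt_le, Rinv_0_lt_compat; lra | nra].
  - apply Rmult_le_compat_l; [lra | apply Rinv_le_contravar; lra].
Qed.

Lemma pow_sqr_S_le (t : R) (N : nat) : 0 <= t <= 1 -> (t ^ 2) ^ S N <= t ^ N.
Proof.
  intros Ht. rewrite <- pow_mult.
  replace (2 * S N)%nat with (N + (N + 2))%nat by lia. rewrite pow_add.
  assert (0 <= t ^ N) by (apply pow_le; lra).
  assert (t ^ (N + 2) <= 1) by (rewrite <- (pow1 (N + 2)); apply pow_incr; lra).
  nra.
Qed.

Lemma is_series_of_trig_kernel (x δ : R) (w trig P : R -> R) (a : nat -> R) (L : R) :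
  0 < δ ->
  (forall u N, sum_n (fun k => u ^ k * trig (INR (S k) * x)) N * (1 - 2 * u * cos x + u ^ 2)
     = P u - u ^ S N * (trig (INR (S (S N)) * x) - u * trig (INR (S N) * x))) ->
  (forall z, Rabs (trig z) <= 1) ->
  (forall t, 0 <= t <= 1 -> Rabs (w t) <= 1) ->
  (forall t, 0 <= t <= 1 -> δ <= 1 - 2 * t ^ 2 * cos x + (t ^ 2) ^ 2) ->
  (forall n, is_RInt (fun t => w t * ((t ^ 2) ^ n * trig (INR (S n) * x))) 0 1 (a n)) ->
  is_RInt (fun t => w t * (P (t ^ 2) / (1 - 2 * t ^ 2 * cos x + (t ^ 2) ^ 2))) 0 1 L ->
  is_series a L.
Proof.
  intros Hδ Hsum Htrig Hw HD Ha HL.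
  apply (is_series_of_RInt_remainder a _ _ L (2 / δ) Ha HL).
  intros N t Ht.
  rewrite (sum_n_mult_l (w t)). change (mult (w t) ?s) with (w t * s).
  rewrite <- Rmult_minus_distr_l, Rabs_mult.
  assert (Hu : 0 <= t ^ 2 <= 1) by (split; nra).
  pose proof (trig_geometric_remainder x δ (t ^ 2) trig P N Hu Hδ (HD t Ht) Htrig (Hsum _ _)).
  pose proof (pow_sqr_S_le t N Ht).
  apply Rle_trans with (1 * (2 * (t ^ 2) ^ S N / δ)).
  - apply Rmult_le_compat; auto using Rabs_pos.
  - unfold Rdiv. rewrite Rmult_1_l, (Rmult_comm 2), (Rmult_assoc _ 2), Rmult_comm.
    apply Rmult_le_compat_l; [|assumption].
    apply Rmult_le_pos; [lra | apply Rlt_le, Rinv_0_lt_compat; lra].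
Qed.

Definition quadm (c t : R) : R := t ^ 2 - 2 * c * t + 1.
Definition quadp (c t : R) : R := t ^ 2 + 2 * c * t + 1.

Lemma sqr_le_quadm (c s t : R) : c ^ 2 + s ^ 2 = 1 -> s ^ 2 <= quadm c t.
Proof. intros Hcs. unfold quadm. pose proof (pow2_ge_0 (t - c)). nra. Qed.

Lemma sqr_le_quadp (c s t : R) : c ^ 2 + s ^ 2 = 1 -> s ^ 2 <= quadp c t.
Proof. intros Hcs. unfold quadp. pose proof (pow2_ge_0 (t + c)). nra. Qed.

Lemma quadm_mul_quadp (x t : R) :
  quadm (cos (x / 2)) t * quadp (cos (x / 2)) t = 1 - 2 * t ^ 2 * cos x + (t ^ 2) ^ 2.
Proof.
  replace x with (2 * (x / 2)) at 3 by field. rewrite cos_2a_cos.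
  unfold quadm, quadp. ring.
Qed.

Definition atan_ln_prim (c s a b g d e t : R) : R :=
  a * t + b / s * atan ((t - c) / s) + g / s * atan ((t + c) / s)
  + d * ln (quadm c t) + e * ln (quadp c t).

Lemma is_derive_atan_ln_prim (c s a b g d e t : R) : 0 < s -> c ^ 2 + s ^ 2 = 1 ->
  is_derive (atan_ln_prim c s a b g d e) t
    (a + (b + d * (2 * t - 2 * c)) / quadm c t + (g + e * (2 * t + 2 * c)) / quadp c t).
Proof.
  intros Hs Hcs.
  pose proof (sqr_le_quadm c s t Hcs). pose proof (sqr_le_quadp c s t Hcs).
  assert (0 < s ^ 2) by nra.
  unfold atan_ln_prim, quadm, quadp in *. auto_derive.
  - repeat split; nra.
  - replace (1 + (t + - c) * / s * ((t + - c) * / s * 1)) with ((t ^ 2 - 2 * c * t + 1) / s ^ 2)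
      by (transitivity (((t - c) ^ 2 + s ^ 2) / s ^ 2); [f_equal; nra | field; lra]).
    replace (1 + (t + c) * / s * ((t + c) * / s * 1)) with ((t ^ 2 + 2 * c * t + 1) / s ^ 2)
      by (transitivity (((t + c) ^ 2 + s ^ 2) / s ^ 2); [f_equal; nra | field; lra]).
    field. repeat split; nra.
Qed.

Lemma is_RInt_atan_ln_prim (c s a b g d e : R) : 0 < s -> c ^ 2 + s ^ 2 = 1 ->
  is_RInt (fun t => a + (b + d * (2 * t - 2 * c)) / quadm c t
                      + (g + e * (2 * t + 2 * c)) / quadp c t) 0 1
    (atan_ln_prim c s a b g d e 1 - atan_ln_prim c s a b g d e 0).
Proof.
  intros Hs Hcs.
  apply (is_RInt_derive (atan_ln_prim c s a b g d e)).
  - intros t _. apply is_derive_atan_ln_prim; assumption.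
  - intros t _.
    pose proof (sqr_le_quadm c s t Hcs). pose proof (sqr_le_quadp c s t Hcs).
    assert (0 < s ^ 2) by nra.
    apply (ex_derive_continuous (fun t => a + (b + d * (2 * t - 2 * c)) / quadm c t
                                            + (g + e * (2 * t + 2 * c)) / quadp c t)).
    unfold quadm, quadp in *. auto_derive. split; lra.
Qed.

Lemma cos_sqr_add_sin_sqr (y : R) : cos y ^ 2 + sin y ^ 2 = 1.
Proof. rewrite <- !Rsqr_pow2, Rplus_comm. apply sin2_cos2. Qed.

Lemma Rabs_cos_le_1 (y : R) : Rabs (cos y) <= 1.
Proof. apply Rabs_le, COS_bound. Qed.

Lemma Rabs_sin_le_1 (y : R) : Rabs (sin y) <= 1.
Proof. apply Rabs_le, SIN_bound. Qed.

Lemma sin_double_half (x : R) : sin x = 2 * sin (x / 2) * cos (x / 2).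
Proof. rewrite <- sin_2a. f_equal. field. Qed.

Lemma cos_double_half (x : R) : cos x = 2 * cos (x / 2) ^ 2 - 1.
Proof. replace x with (2 * (x / 2)) at 1 by field. rewrite cos_2a_cos. ring. Qed.

Lemma is_RInt_trinomial_0_1 (A B E : R) (m1 m2 m3 : nat) :
  is_RInt (fun t => A * t ^ m1 + B * t ^ m2 + E * t ^ m3) 0 1
    (A / INR (S m1) + B / INR (S m2) + E / INR (S m3)).
Proof.
  exact (is_RInt_plus _ _ _ _ _ _
           (is_RInt_plus _ _ _ _ _ _ (is_RInt_scal_pow_0_1 A m1) (is_RInt_scal_pow_0_1 B m2))
           (is_RInt_scal_pow_0_1 E m3)).
Qed.

Definition weight0 (t : R) : R := (1 - t ^ 2) / 2.
Definition weight1 (t : R) : R := (1 - t) ^ 2 / 2.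

Lemma Rabs_weight0_le (t : R) : 0 <= t <= 1 -> Rabs (weight0 t) <= 1.
Proof. intros. unfold weight0. apply Rabs_le. split; nra. Qed.

Lemma Rabs_weight1_le (t : R) : 0 <= t <= 1 -> Rabs (weight1 t) <= 1.
Proof. intros. unfold weight1. apply Rabs_le. split; nra. Qed.

Lemma is_RInt_weight0_moment (T : R) (n : nat) :
  is_RInt (fun t => weight0 t * ((t ^ 2) ^ n * T)) 0 1 (T / den 0 n).
Proof.
  apply (is_RInt_ext (fun t => T / 2 * t ^ (2 * n) + - T / 2 * t ^ (2 * n + 2) + 0 * t ^ 0)).
  - intros t _. unfold weight0. rewrite <- pow_mult, pow_add. simpl. field.
  - replace (T / den 0 n) with (T / 2 / INR (S (2 * n)) + - T / 2 / INR (S (2 * n + 2))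
                                 + 0 / INR 1).
    + apply is_RInt_trinomial_0_1.
    + unfold den. rewrite !S_INR, !plus_INR, !mult_INR. simpl.
      pose proof (pos_INR n). field. repeat split; lra.
Qed.

Lemma is_RInt_weight1_moment (T : R) (n : nat) :
  is_RInt (fun t => weight1 t * ((t ^ 2) ^ n * T)) 0 1 (T / den 1 n).
Proof.
  apply (is_RInt_ext (fun t => T / 2 * t ^ (2 * n) + - T * t ^ (2 * n + 1)
                               + T / 2 * t ^ (2 * n + 2))).
  - intros t _. unfold weight1. rewrite <- pow_mult, !pow_add. simpl. field.
  - replace (T / den 1 n) with (T / 2 / INR (S (2 * n)) + - T / INR (S (2 * n + 1))
                                 + T / 2 / INR (S (2 * n + 2))).
    + apply is_RInt_trinomial_0_1.
    + unfold den. rewrite !S_INR, !plus_INR, !mult_INR. simpl.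
      pose proof (pos_INR n). field. repeat split; lra.
Qed.

Section HalfAngle.

Variable x : R.
Hypothesis hx0 : 0 < x.
Hypothesis hx1 : x < 2 * PI.

Lemma sin_half_pos : 0 < sin (x / 2).
Proof. apply sin_gt_0; lra. Qed.

Lemma tan_quarter_pos : 0 < tan (x / 4).
Proof. apply tan_gt_0; lra. Qed.

Lemma tan_quarter_eq : tan (x / 4) = (1 - cos (x / 2)) / sin (x / 2)
                    /\ tan (x / 4) = sin (x / 2) / (1 + cos (x / 2)).
Proof.
  assert (0 < sin (x / 4)) by (apply sin_gt_0; lra).
  assert (0 < cos (x / 4)) by (apply cos_gt_0; lra).
  replace (x / 2) with (2 * (x / 4)) by field.
  unfold tan. rewrite sin_2a.
  split; [rewrite cos_2a_sin | rewrite cos_2a_cos]; field; nra.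
Qed.

Lemma atan_ln_prim_increment (a b g d e : R) :
  atan_ln_prim (cos (x / 2)) (sin (x / 2)) a b g d e 1
  - atan_ln_prim (cos (x / 2)) (sin (x / 2)) a b g d e 0
  = a + b / sin (x / 2) * (PI / 2 - x / 4) + g / sin (x / 2) * (x / 4)
    + (d + e) * ln (2 * sin (x / 2)) + (d - e) * ln (tan (x / 4)).
Proof.
  pose proof sin_half_pos as Hs. pose proof tan_quarter_pos as Ht.
  destruct tan_quarter_eq as [Htm Htp].
  set (c := cos (x / 2)) in *. set (s := sin (x / 2)) in *.
  assert (Hcs : c ^ 2 + s ^ 2 = 1) by apply cos_sqr_add_sin_sqr.
  assert (Hcp : 0 < 1 + c) by nra.
  assert (Hatan_tan : atan (tan (x / 4)) = x / 4) by (apply atan_tan; lra).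
  assert (Hcot : (0 + c) / s = tan (PI / 2 - x / 2))
    by (unfold tan; rewrite sin_shift, cos_shift; fold c s; field; lra).
  assert (Hatan_cot : atan (tan (PI / 2 - x / 2)) = PI / 2 - x / 2) by (apply atan_tan; lra).
  unfold atan_ln_prim, quadm, quadp.
  rewrite <- Htm.
  replace ((1 + c) / s) with (/ tan (x / 4)) by (rewrite Htp; field; lra).
  replace ((0 - c) / s) with (- tan (PI / 2 - x / 2)) by (rewrite <- Hcot; field; lra).
  rewrite atan_inv, atan_opp, Hatan_tan, Hcot, Hatan_cot by exact Ht.
  replace (1 ^ 2 - 2 * c * 1 + 1) with (2 * s * tan (x / 4)) by (rewrite Htm; field; lra).
  replace (1 ^ 2 + 2 * c * 1 + 1) with (2 * s / tan (x / 4)) by (rewrite Htp; field; lra).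
  replace (0 ^ 2 - 2 * c * 0 + 1) with 1 by ring.
  replace (0 ^ 2 + 2 * c * 0 + 1) with 1 by ring.
  rewrite ln_mult, ln_div, ln_1 by lra.
  field. lra.
Qed.

Lemma trig_denominator_lower_bound (t : R) :
  sin (x / 2) ^ 4 <= 1 - 2 * t ^ 2 * cos x + (t ^ 2) ^ 2.
Proof.
  rewrite <- quadm_mul_quadp.
  pose proof (cos_sqr_add_sin_sqr (x / 2)) as Hcs.
  pose proof (sqr_le_quadm _ _ t Hcs). pose proof (sqr_le_quadp _ _ t Hcs).
  replace (sin (x / 2) ^ 4) with (sin (x / 2) ^ 2 * sin (x / 2) ^ 2) by ring.
  apply Rmult_le_compat; nra.
Qed.

Lemma is_RInt_kernel_atan_ln (w P : R -> R) (a b g d e : R) :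
  let c := cos (x / 2) in
  (forall t, w t * P (t ^ 2) = a * quadm c t * quadp c t + (b + d * (2 * t - 2 * c)) * quadp c t
                              + (g + e * (2 * t + 2 * c)) * quadm c t) ->
  is_RInt (fun t => w t * (P (t ^ 2) / (1 - 2 * t ^ 2 * cos x + (t ^ 2) ^ 2))) 0 1
    (a + b / sin (x / 2) * (PI / 2 - x / 4) + g / sin (x / 2) * (x / 4)
     + (d + e) * ln (2 * sin (x / 2)) + (d - e) * ln (tan (x / 4))).
Proof.
  intros c Hw.
  pose proof sin_half_pos as Hs.
  pose proof (cos_sqr_add_sin_sqr (x / 2)) as Hcs.
  rewrite <- atan_ln_prim_increment.
  apply (is_RInt_ext (fun t => a + (b + d * (2 * t - 2 * c)) / quadm c t
                                 + (g + e * (2 * t + 2 * c)) / quadp c t));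
    [| exact (is_RInt_atan_ln_prim _ _ a b g d e Hs Hcs)].
  intros t _. match goal with |- @eq _ ?l ?r => change (@eq R l r) end.
  pose proof (sqr_le_quadm _ _ t Hcs) as Hm. pose proof (sqr_le_quadp _ _ t Hcs) as Hp.
  rewrite <- quadm_mul_quadp, Rmult_div_assoc. fold c in Hm, Hp |- *.
  rewrite Hw. field. split; nra.
Qed.

Lemma is_series_cos_kernel (w : R -> R) (p : nat) (a b g d e L : R) :
  let c := cos (x / 2) in
  (forall t, 0 <= t <= 1 -> Rabs (w t) <= 1) ->
  (forall T n, is_RInt (fun t => w t * ((t ^ 2) ^ n * T)) 0 1 (T / den p n)) ->
  (forall t, w t * (cos x - t ^ 2) = a * quadm c t * quadp c t
       + (b + d * (2 * t - 2 * c)) * quadp c t + (g + e * (2 * t + 2 * c)) * quadm c t) ->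
  L = a + b / sin (x / 2) * (PI / 2 - x / 4) + g / sin (x / 2) * (x / 4)
      + (d + e) * ln (2 * sin (x / 2)) + (d - e) * ln (tan (x / 4)) ->
  is_series (fun n => cos (INR (S n) * x) / den p n) L.
Proof.
  intros c Hw Hmom Hpf ->.
  pose proof sin_half_pos as Hs.
  apply (is_series_of_trig_kernel x (sin (x / 2) ^ 4) w cos (fun u => cos x - u)).
  - apply pow_lt, Hs.
  - intros; apply sum_n_pow_cos.
  - exact Rabs_cos_le_1.
  - exact Hw.
  - intros t _. apply trig_denominator_lower_bound.
  - intros n. apply Hmom.
  - apply is_RInt_kernel_atan_ln, Hpf.
Qed.

Lemma is_series_sin_kernel (w : R -> R) (p : nat) (a b g d e L : R) :
  let c := cos (x / 2) in
  (forall t, 0 <= t <= 1 -> Rabs (w t) <= 1) ->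
  (forall T n, is_RInt (fun t => w t * ((t ^ 2) ^ n * T)) 0 1 (T / den p n)) ->
  (forall t, w t * sin x = a * quadm c t * quadp c t
       + (b + d * (2 * t - 2 * c)) * quadp c t + (g + e * (2 * t + 2 * c)) * quadm c t) ->
  L = a + b / sin (x / 2) * (PI / 2 - x / 4) + g / sin (x / 2) * (x / 4)
      + (d + e) * ln (2 * sin (x / 2)) + (d - e) * ln (tan (x / 4)) ->
  is_series (fun n => sin (INR (S n) * x) / den p n) L.
Proof.
  intros c Hw Hmom Hpf ->.
  pose proof sin_half_pos as Hs.
  apply (is_series_of_trig_kernel x (sin (x / 2) ^ 4) w sin (fun _ => sin x)).
  - apply pow_lt, Hs.
  - intros; apply sum_n_pow_sin.
  - exact Rabs_sin_le_1.
  - exact Hw.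
  - intros t _. apply trig_denominator_lower_bound.
  - intros n. apply Hmom.
  - apply (is_RInt_kernel_atan_ln w (fun _ => sin x)), Hpf.
Qed.

Lemma is_series_cos_den0 :
  is_series (fun n => cos (INR (S n) * x) / den 0 n) (1/2 - PI/4 * sin (x/2)).
Proof.
  pose proof sin_half_pos as Hs.
  pose proof (cos_sqr_add_sin_sqr (x / 2)) as Hcs.
  set (b := - sin (x / 2) ^ 2 / 2).
  apply (is_series_cos_kernel weight0 0 (1/2) b b 0 0 _ Rabs_weight0_le is_RInt_weight0_moment).
  - intros t. unfold b. replace (sin (x / 2) ^ 2) with (1 - cos (x / 2) ^ 2) by lra.
    rewrite cos_double_half. unfold weight0, quadm, quadp. field.
  - unfold b. field. lra.
Qed.

Lemma is_series_sin_den0 :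
  is_series (fun n => sin (INR (S n) * x) / den 0 n) (- (1/2) * sin (x/2) * ln (tan (x/4))).
Proof.
  apply (is_series_sin_kernel weight0 0 0 0 0 (- sin (x / 2) / 4) (sin (x / 2) / 4) _
           Rabs_weight0_le is_RInt_weight0_moment).
  - intros t. rewrite sin_double_half. unfold weight0, quadm, quadp. field.
  - pose proof sin_half_pos. field. lra.
Qed.

Lemma is_series_cos_den1 :
  is_series (fun n => cos (INR (S n) * x) / den 1 n)
    (- (1/2) - 1/2 * cos (x/2) * ln (tan (x/4)) + 1/2 * ln (2 * sin (x/2))).
Proof.
  apply (is_series_cos_kernel weight1 1 (-1/2) 0 0 ((1 - cos (x / 2)) / 4)
           ((1 + cos (x / 2)) / 4) _ Rabs_weight1_le is_RInt_weight1_moment).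
  - intros t. rewrite cos_double_half. unfold weight1, quadm, quadp. field.
  - pose proof sin_half_pos. field. lra.
Qed.

Lemma is_series_sin_den1 :
  is_series (fun n => sin (INR (S n) * x) / den 1 n) (PI/4 * cos (x/2) - 1/4 * (PI - x)).
Proof.
  pose proof sin_half_pos as Hs.
  apply (is_series_sin_kernel weight1 1 0 ((cos (x / 2) - 1) * sin (x / 2) / 2)
           ((cos (x / 2) + 1) * sin (x / 2) / 2) 0 0 _ Rabs_weight1_le is_RInt_weight1_moment).
  - intros t. rewrite sin_double_half. unfold weight1, quadm, quadp. field.
  - field. lra.
Qed.

End HalfAngle.

Lemma is_series_inv_telescope : is_series (fun n => / INR (S n) - / INR (S (S n))) 1.
Proof.
  apply is_series_of_rate with 1. intros N.
  assert (Hsum : @eq R (sum_n (fun n => / INR (S n) - / INR (S (S n))) N) (1 - / INR (S (S N)))).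
  { induction N as [|N IH].
    - rewrite sum_O. simpl. field.
    - rewrite sum_Sn, IH. change (plus ?a ?b) with (a + b). ring. }
  rewrite Hsum.
  assert (0 < INR (S N)) by (apply lt_0_INR; lia).
  assert (INR (S N) <= INR (S (S N))) by (apply le_INR; lia).
  replace (1 - / INR (S (S N)) - 1) with (- / INR (S (S N))) by ring.
  rewrite Rabs_Ropp, Rabs_right by (apply Rle_ge, Rlt_le, Rinv_0_lt_compat; lra).
  unfold Rdiv. rewrite Rmult_1_l. apply Rinv_le_contravar; lra.
Qed.

Lemma ex_series_trig_div_pow (trig : R -> R) (x : R) (m : nat) :
  (2 <= m)%nat -> (forall z, Rabs (trig z) <= 1) ->
  ex_series (fun n => trig (INR (S n) * x) / INR (S n) ^ m).
Proof.
  intros Hm Htrig.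
  apply (ex_series_le (V := R_CompleteNormedModule) _
           (fun n => 2 * (/ INR (S n) - / INR (S (S n))))).
  - intros n. change (norm ?a) with (Rabs a).
    rewrite (S_INR (S n)). set (k := INR (S n)).
    assert (Hk : 1 <= k) by (unfold k; rewrite S_INR; pose proof (pos_INR n); lra).
    assert (Hkm : k ^ 2 <= k ^ m) by (apply Rle_pow; assumption).
    pose proof (Htrig (k * x)).
    rewrite Rabs_div, (Rabs_right (k ^ m)) by (try apply Rle_ge; nra).
    apply Rle_trans with (1 / k ^ 2).
    + unfold Rdiv. apply Rmult_le_compat; try lra; [apply Rabs_pos | |].
      * apply Rlt_le, Rinv_0_lt_compat; nra.
      * apply Rinv_le_contravar; nra.
    + replace (2 * (/ k - / (k + 1))) with (2 / (k * (k + 1))) by (field; lra).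
      apply Rmult_le_reg_r with (k ^ 2 * (k * (k + 1))); [nra|].
      field_simplify; nra.
  - exists (scal 2 1). exact (is_series_scal 2 _ _ is_series_inv_telescope).
Qed.

Lemma div_den_SS (y : R) (p n : nat) :
  y / den (S (S p)) n = y / den p n - / 2 ^ S (S p) * (y / INR (S n) ^ S (S p)).
Proof.
  unfold den. set (k := INR (S n)).
  assert (1 <= k) by (unfold k; rewrite S_INR; pose proof (pos_INR n); lra).
  assert (0 < k ^ p) by (apply pow_lt; lra).
  assert (0 < 2 ^ p) by (apply pow_lt; lra).
  rewrite !Rpow_mult_distr. simpl. field. repeat split; lra.
Qed.

Lemma is_series_den_SS (trig : R -> R) (p : nat) (x L : R) :
  (forall z, Rabs (trig z) <= 1) ->
  is_series (fun n => trig (INR (S n) * x) / den p n) L ->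
  is_series (fun n => trig (INR (S n) * x) / den (S (S p)) n)
    (L - Series (fun n => trig (INR (S n) * x) / INR (S n) ^ S (S p)) / 2 ^ S (S p)).
Proof.
  intros Htrig HL.
  pose proof (Series_correct _ (ex_series_trig_div_pow trig x (S (S p)) ltac:(lia) Htrig)) as HS.
  replace (L - _ / _) with (L - / 2 ^ S (S p)
             * Series (fun n => trig (INR (S n) * x) / INR (S n) ^ S (S p)))
    by (unfold Rdiv; ring).
  eapply is_series_ext; [intros n; symmetry; apply div_den_SS |].
  exact (is_series_minus _ _ _ _ HL (is_series_scal (/ 2 ^ S (S p)) _ _ HS)).
Qed.

Lemma fsum1_0 (f : nat -> R) : fsum1 0 f = 0.
Proof. exact (sum_n_m_zero (G := R_AbelianMonoid) f 1 0 ltac:(lia)). Qed.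

Lemma fsum1_S (q : nat) (f : nat -> R) : fsum1 (S q) f = fsum1 q f + f (S q).
Proof. unfold fsum1. rewrite sum_n_Sm by lia. reflexivity. Qed.

Lemma is_series_den_add_double (trig : R -> R) (p m : nat) (x L : R) (G : nat -> R) :
  (forall z, Rabs (trig z) <= 1) ->
  (forall j, G j = Series (fun n => trig (INR (S n) * x) / INR (S n) ^ (p + 2 * j))
                   / 2 ^ (p + 2 * j)) ->
  is_series (fun n => trig (INR (S n) * x) / den p n) L ->
  is_series (fun n => trig (INR (S n) * x) / den (p + 2 * m) n) (L - fsum1 m G).
Proof.
  intros Htrig HG HL. induction m as [|m IH].
  - rewrite Nat.add_0_r, fsum1_0, Rminus_0_r. exact HL.
  - rewrite fsum1_S, HG, Rminus_plus_distr.
    replace (p + 2 * S m)%nat with (S (S (p + 2 * m))) by lia.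
    apply is_series_den_SS; assumption.
Qed.

Theorem corollary6 (p : nat) (x : R) (hx0 : 0 < x) (hx1 : x < 2 * PI) :
  is_series (fun n => cos (INR (S n) * x) / den p n)
    (if Nat.even p
     then 1/2 - PI/4 * sin (x/2)
          - fsum1 (p / 2) (fun j => Gl (2*j) x / 2 ^ (2*j))
     else - (1/2) - 1/2 * cos (x/2) * ln (tan (x/4)) + 1/2 * ln (2 * sin (x/2))
          - fsum1 ((p - 1) / 2) (fun j => Cl (2*j+1) x / 2 ^ (2*j+1)))
  /\
  is_series (fun n => sin (INR (S n) * x) / den p n)
    (if Nat.even p
     then - (1/2) * sin (x/2) * ln (tan (x/4))
          - fsum1 (p / 2) (fun j => Cl (2*j) x / 2 ^ (2*j))
     else PI/4 * cos (x/2) - 1/4 * (PI - x)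
          - fsum1 ((p - 1) / 2) (fun j => Gl (2*j+1) x / 2 ^ (2*j+1))).
Proof.
  destruct (Nat.Even_or_Odd p) as [[m ->] | [m ->]].
  - rewrite Nat.even_even.
    replace (2 * m / 2)%nat with m by (rewrite Nat.mul_comm, Nat.div_mul; lia).
    split; apply (is_series_den_add_double _ 0 m x);
      auto using Rabs_cos_le_1, Rabs_sin_le_1, is_series_cos_den0, is_series_sin_den0;
      intros j; unfold Gl, Cl; rewrite Nat.even_even; reflexivity.
  - rewrite Nat.even_odd.
    replace ((2 * m + 1 - 1) / 2)%nat with m
      by (rewrite Nat.add_sub, Nat.mul_comm, Nat.div_mul; lia).
    replace (2 * m + 1)%nat with (1 + 2 * m)%nat by lia.
    split; apply (is_series_den_add_double _ 1 m x);
      auto using Rabs_cos_le_1, Rabs_sin_le_1, is_series_cos_den1, is_series_sin_den1;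
      intros j; unfold Gl, Cl; rewrite Nat.even_odd, (Nat.add_comm (2 * j) 1); reflexivity.
Qed.
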